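(* Assume $\frac\pi2<\omega<\pi$ and $q>0$. For every $(a,f,g)\in\mathcal C$ there is a function $\tilde f$ with $0\le\tilde f(r)\le\frac\pi2$ for all $r\ge0$ such that $(a,\tilde f,g)\in\mathcal C$ and $L(a,\tilde f,g)\le L(a,f,g)$. Consequently, in minimizing $L$ over $\mathcal C$ one may restrict to functions $f$ with $0\le f\le\frac\pi2$.
   Context: Fix $\kappa>0$, $\omega\in(\frac\pi2,\pi)$, $q>0$; $'=d/dr$. Define $\mathcal E_1=2\big(2(a')^2+\frac{(a^2-1)^2}{r^2}\big)+\frac12\big(r^2(f')^2+2a^2\sin^2f\big)+2\kappa a^2\sin^2f\big(2(f')^2+\frac{a^2\sin^2f}{r^2}\big)$, $\mathcal E_2=r^2(g')^2+2a^2g^2$, $L(a,f,g)=\int_0^\infty(\mathcal E_1-\mathcal E_2)\,dr$, $E(a,f,g)=\int_0^\infty(\mathcal E_1+\mathcal E_2)\,dr$, and for functions $a,G$, $E_2(a,G)=\int_0^\infty(r^2(G')^2+2a^2G^2)\,dr$. The admissible set $\mathcal A$ consists of triples $(a,f,g)$ of continuous functions on $[0,\infty)$ that are absolutely continuous on every compact subinterval of $(0,\infty)$, satisfy $a(0)=1$, $\lim_{r\to\infty}a(r)=0$, $f(0)=0$, $\lim_{r\to\infty}f(r)=\pi-\omega$, $\lim_{r\to\infty}g(r)=q$, and have $E(a,f,g)<\infty$. The constrained class $\mathcal C$ consists of those $(a,f,g)\in\mathcal A$ such that $\int_0^\infty(r^2g'G'+2a^2gG)\,dr=0$ for every function $G$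 on $(0,\infty)$, absolutely continuous on compact subintervals of $(0,\infty)$, with $G(r)\to0$ as $r\to\infty$ and $E_2(a,G)<\infty$. *)

From Stdlib Require Import Reals Lra.
Open Scope R_scope.

Fixpoint rsum (n : nat) (f : nat -> R) : R :=
  match n with O => 0 | S k => rsum k f + f k end.

Definition is_glb (E : R -> Prop) (m : R) : Prop :=
  (forall s, E s -> m <= s) /\ (forall m', (forall s, E s -> m' <= s) -> m' <= m).

Definition null_set (A : R -> Prop) : Prop :=
  forall eps, 0 < eps -> exists (an bn : nat -> R),
    (forall x, A x -> exists n, an n < x < bn n) /\
    (forall n, an n <= bn n) /\
    (forall N, rsum N (fun n => bn n - an n) <= eps).

Definition closed_set (K : R -> Prop) : Prop :=
  forall x, ~ K x -> exists d, 0 < d /\ forall y, Rabs (y - x) < d -> ~ K y.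
Definition bounded_set (K : R -> Prop) : Prop :=
  exists M, forall x, K x -> Rabs x <= M.
Definition compact_set (K : R -> Prop) : Prop := closed_set K /\ bounded_set K.

(* Lebesgue measure of a compact set = inf of total lengths of finite open covers *)
Definition compact_measure (K : R -> Prop) (m : R) : Prop :=
  is_glb (fun s => exists (n : nat) (an bn : nat -> R),
            (forall i, (i < n)%nat -> an i <= bn i) /\
            (forall x, K x -> exists i, (i < n)%nat /\ an i < x < bn i) /\
            s = rsum n (fun i => bn i - an i)) m.

(* For a nonnegative (Lebesgue)
   measurable h, the supremum of these is the Lebesgue integral of h over
   (0,oo) (inner regularity of Lebesgue measure). *)
Definition lower_sums (h : R -> R) (v : R) : Prop :=
  exists (n : nat) (c : nat -> R) (K : nat -> R -> Prop) (m : nat -> R),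
    (forall i, (i < n)%nat ->
        0 <= c i /\ compact_set (K i) /\ (forall x, K i x -> 0 < x) /\
        compact_measure (K i) (m i) /\ (forall x, K i x -> c i <= h x)) /\
    (forall i j x, (i < n)%nat -> (j < n)%nat -> i <> j -> K i x -> K j x -> False) /\
    v = rsum n (fun i => c i * m i).

Definition nonneg_integral (h : R -> R) (I : R) : Prop := is_lub (lower_sums h) I.

Definition integral_is (h : R -> R) (I : R) : Prop :=
  exists Ip In, nonneg_integral (fun x => Rmax 0 (h x)) Ip /\
                nonneg_integral (fun x => Rmax 0 (- h x)) In /\ I = Ip - In.

Definition cont_on_nonneg (h : R -> R) : Prop :=
  forall x, 0 <= x -> forall eps, 0 < eps -> exists d, 0 < d /\
    forall y, 0 <= y -> Rabs (y - x) < d -> Rabs (h y - h x) < eps.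

Definition abs_cont_on (h : R -> R) (c d : R) : Prop :=
  forall eps, 0 < eps -> exists del, 0 < del /\
    forall (n : nat) (x y : nat -> R),
      (forall i, (i < n)%nat -> c <= x i /\ x i <= y i /\ y i <= d) /\
      (forall i, (S i < n)%nat -> y i <= x (S i)) ->
      rsum n (fun i => y i - x i) < del ->
      rsum n (fun i => Rabs (h (y i) - h (x i))) < eps.

Definition loc_abs_cont (h : R -> R) : Prop :=
  forall c d, 0 < c -> c <= d -> abs_cont_on h c d.

Definition ae_deriv (h dh : R -> R) : Prop :=
  null_set (fun r => 0 < r /\ ~ derivable_pt_lim h r (dh r)).

Definition lim_infty (h : R -> R) (l : R) : Prop :=
  forall eps, 0 < eps -> exists M, forall r, M <= r -> Rabs (h r - l) < eps.

Definition E1 (kappa : R) (a f da df : R -> R) (r : R) : R :=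
  2 * (2 * (da r)^2 + ((a r)^2 - 1)^2 / r^2)
  + / 2 * (r^2 * (df r)^2 + 2 * (a r)^2 * (sin (f r))^2)
  + 2 * kappa * (a r)^2 * (sin (f r))^2
      * (2 * (df r)^2 + (a r)^2 * (sin (f r))^2 / r^2).

Definition E2 (a g dg : R -> R) (r : R) : R :=
  r^2 * (dg r)^2 + 2 * (a r)^2 * (g r)^2.

Definition L_is (kappa : R) (a f g da df dg : R -> R) (l : R) : Prop :=
  integral_is (fun r => E1 kappa a f da df r - E2 a g dg r) l.

Definition admissible (kappa omega q : R) (a f g da df dg : R -> R) : Prop :=
  cont_on_nonneg a /\ cont_on_nonneg f /\ cont_on_nonneg g /\
  loc_abs_cont a /\ loc_abs_cont f /\ loc_abs_cont g /\
  ae_deriv a da /\ ae_deriv f df /\ ae_deriv g dg /\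
  a 0 = 1 /\ lim_infty a 0 /\
  f 0 = 0 /\ lim_infty f (PI - omega) /\
  lim_infty g q /\
  (exists I, nonneg_integral (fun r => E1 kappa a f da df r + E2 a g dg r) I).

Definition in_C (kappa omega q : R) (a f g da df dg : R -> R) : Prop :=
  admissible kappa omega q a f g da df dg /\
  forall G dG : R -> R,
    loc_abs_cont G -> ae_deriv G dG -> lim_infty G 0 ->
    (exists I, nonneg_integral (fun r => r^2 * (dG r)^2 + 2 * (a r)^2 * (G r)^2) I) ->
    integral_is (fun r => r^2 * dg r * dG r + 2 * (a r)^2 * g r * G r) 0.

From Pilot Require Import Defs.
From Stdlib Require Import Reals Lra Lia ZArith Classical ClassicalEpsilon Cantor
  FunctionalExtensionality.
Open Scope R_scope.

(* Replace f by its "fold" pi_fold o f, where pi_fold x is the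
   distance from x to the nearest integer multiple of PI.  The fold takes values
   in [0, PI/2], is 1-Lipschitz, fixes [0, PI/2) (so it keeps f(0) = 0 and the
   limit PI - omega), and preserves sin^2.  Its derivative is +-1 away from the
   kinks (PI/2) Z, so the a.e. derivative of the folded function is
   +- f', whose square is (f')^2; hence the density E1, and therefore L and the
   energy, are literally unchanged.  The only delicate point is the a.e.
   derivative: the chain rule fails only where f hits a kink with f' <> 0, and
   such points are isolated in a level set of f, hence countable, hence null.
   The file develops: the fold map; null sets (subsets, unions, countable
   sets); countability of isolated points of level sets; transfer of the
   regularity conditions of the admissible class through a 1-Lipschitz map;
   the invariance of E1 and existence of L; and finally the theorem. *)

(** * The fold map [pi_fold] *)

Definition pi_round (x : R) : Z := (up (x / PI + / 2) - 1)%Z.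
Definition pi_offset (x : R) : R := x - PI * IZR (pi_round x).

(* Distance from x to the nearest multiple of PI. *)
Definition pi_fold (x : R) : R := Rabs (pi_offset x).

(* Sign of the slope of [pi_fold] at x. *)
Definition fold_sign (x : R) : R := if Rle_dec 0 (pi_offset x) then 1 else -1.

Lemma Rabs_PI_mult y : Rabs (PI * y) = PI * Rabs y.
Proof. rewrite Rabs_mult, Rabs_right; [reflexivity | left; exact PI_RGT_0]. Qed.

Lemma pi_round_spec x : Rabs (x / PI - IZR (pi_round x)) <= / 2.
Proof.
  unfold pi_round. destruct (archimed (x / PI + / 2)) as [H1 H2].
  rewrite minus_IZR. apply Rabs_le. simpl (IZR 1). lra.
Qed.

Lemma pi_fold_range x : 0 <= pi_fold x <= PI / 2.
Proof.
  unfold pi_fold, pi_offset. pose proof PI_RGT_0. split; [apply Rabs_pos |].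
  replace (x - PI * IZR (pi_round x)) with (PI * (x / PI - IZR (pi_round x)))
    by (field; lra).
  rewrite Rabs_PI_mult. pose proof (pi_round_spec x).
  apply Rmult_le_compat_l with (r := PI) in H0; lra.
Qed.

(* Distinct multiples of PI are PI apart, so x is within PI/2 of at most one. *)
Lemma distinct_multiples_far x j k : j <> k ->
  PI <= Rabs (x - PI * IZR k) + Rabs (x - PI * IZR j).
Proof.
  intro Hjk. pose proof PI_RGT_0.
  assert (Hsep : 1 <= Rabs (IZR j - IZR k)).
  { rewrite <- minus_IZR.
    destruct (Z_lt_le_dec (j - k) 0) as [Hl | Hl].
    - assert (Hl' : (j - k <= -1)%Z) by lia. apply IZR_le in Hl'.
      rewrite Rabs_left; simpl in Hl'; lra.
    - assert (Hl' : (1 <= j - k)%Z) by lia. apply IZR_le in Hl'.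
      rewrite Rabs_right; simpl in Hl'; lra. }
  pose proof (Rabs_triang (x - PI * IZR k) (- (x - PI * IZR j))) as Htri.
  replace (x - PI * IZR k + - (x - PI * IZR j)) with (PI * (IZR j - IZR k))
    in Htri by ring.
  rewrite Rabs_Ropp, Rabs_PI_mult in Htri.
  apply Rmult_le_compat_l with (r := PI) in Hsep; lra.
Qed.

Lemma pi_fold_min x j : pi_fold x <= Rabs (x - PI * IZR j).
Proof.
  destruct (Z.eq_dec j (pi_round x)) as [-> | Hne]; [unfold pi_fold, pi_offset; lra |].
  pose proof (distinct_multiples_far x j (pi_round x) Hne).
  pose proof (pi_fold_range x). unfold pi_fold, pi_offset in *. lra.
Qed.

Lemma pi_fold_unique x m : Rabs (x - PI * IZR m) < PI / 2 ->
  pi_fold x = Rabs (x - PI * IZR m).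
Proof.
  intro Hm. destruct (Z.eq_dec m (pi_round x)) as [-> | Hne]; [reflexivity |].
  pose proof (distinct_multiples_far x m (pi_round x) Hne).
  pose proof (pi_fold_range x). unfold pi_fold, pi_offset in *. lra.
Qed.

Definition lipschitz1 (phi : R -> R) : Prop :=
  forall x y, Rabs (phi x - phi y) <= Rabs (x - y).

(* A distance function is 1-Lipschitz. *)
Lemma pi_fold_lipschitz : lipschitz1 pi_fold.
Proof.
  intros x y.
  pose proof (pi_fold_min x (pi_round y)). pose proof (pi_fold_min y (pi_round x)).
  pose proof (Rabs_triang (x - y) (pi_offset y)).
  pose proof (Rabs_triang (y - x) (pi_offset x)).
  unfold pi_fold, pi_offset in *.
  replace (x - y + (y - PI * IZR (pi_round y))) with (x - PI * IZR (pi_round y))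
    in H1 by ring.
  replace (y - x + (x - PI * IZR (pi_round x))) with (y - PI * IZR (pi_round x))
    in H2 by ring.
  rewrite (Rabs_minus_sym y x) in H2. apply Rabs_le. lra.
Qed.

(* sin^2 is PI-periodic and even, so it does not see the fold. *)
Lemma pi_fold_sin2 x : sin (pi_fold x) ^ 2 = sin x ^ 2.
Proof.
  unfold pi_fold, pi_offset. set (k := IZR (pi_round x)).
  assert (Habs : forall y, sin (Rabs y) ^ 2 = sin y ^ 2).
  { intro y. unfold Rabs; destruct (Rcase_abs y); [rewrite sin_neg; ring | reflexivity]. }
  rewrite Habs, sin_minus.
  assert (Hs : sin (PI * k) = 0) by (apply sin_eq_0_1; exists (pi_round x); unfold k; ring).
  assert (Hc : cos (PI * k) * cos (PI * k) = 1).
  { pose proof (sin2_cos2 (PI * k)) as Hc. rewrite Hs in Hc. unfold Rsqr in Hc. lra. }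
  rewrite Hs.
  replace ((sin x * cos (PI * k) - cos x * 0) ^ 2)
    with (sin x ^ 2 * (cos (PI * k) * cos (PI * k))) by ring.
  rewrite Hc. ring.
Qed.

Lemma pi_fold_fixed c : 0 <= c < PI / 2 -> pi_fold c = c.
Proof.
  intro Hc. rewrite (pi_fold_unique c 0); simpl;
    rewrite Rmult_0_r, Rminus_0_r, Rabs_right; lra.
Qed.

(* Off the kinks the fold is locally x |-> +-(x - k PI). *)
Lemma pi_fold_deriv x : 0 < Rabs (pi_offset x) < PI / 2 ->
  derivable_pt_lim pi_fold x (fold_sign x).
Proof.
  intros [H1 H2]. unfold fold_sign. set (u := pi_offset x) in *.
  intros eps Heps.
  assert (Hd : 0 < Rmin (Rabs u) (PI / 2 - Rabs u)) by (apply Rmin_pos; lra).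
  exists (mkposreal _ Hd). intros h Hh Hlt. simpl in Hlt.
  pose proof (Rmin_l (Rabs u) (PI / 2 - Rabs u)).
  pose proof (Rmin_r (Rabs u) (PI / 2 - Rabs u)).
  assert (Hp : pi_fold (x + h) = Rabs (u + h)).
  { replace (u + h) with (x + h - PI * IZR (pi_round x)) by (unfold u, pi_offset; ring).
    apply pi_fold_unique.
    replace (x + h - PI * IZR (pi_round x)) with (u + h) by (unfold u, pi_offset; ring).
    pose proof (Rabs_triang u h). lra. }
  rewrite Hp. change (pi_fold x) with (Rabs u).
  destruct (Rle_dec 0 u) as [Hu | Hu].
  - rewrite (Rabs_right u) in * by lra.
    assert (Hh' : Rabs h < u) by lra. apply Rabs_def2 in Hh' as [? ?].
    rewrite (Rabs_right (u + h)) by lra.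
    replace ((u + h - u) / h - 1) with 0 by (field; exact Hh). rewrite Rabs_R0; lra.
  - rewrite (Rabs_left u) in * by lra.
    assert (Hh' : Rabs h < - u) by lra. apply Rabs_def2 in Hh' as [? ?].
    rewrite (Rabs_left (u + h)) by lra.
    replace ((- (u + h) - - u) / h - -1) with 0 by (field; exact Hh). rewrite Rabs_R0; lra.
Qed.

Lemma pi_fold_kink x : ~ (0 < Rabs (pi_offset x) < PI / 2) ->
  exists j : Z, x = IZR j * (PI / 2).
Proof.
  intro Hk. pose proof (pi_fold_range x). unfold pi_fold, pi_offset in *.
  set (k := pi_round x) in *.
  destruct (Req_dec (x - PI * IZR k) 0) as [E | E].
  - exists (2 * k)%Z. rewrite mult_IZR. simpl (IZR 2). lra.
  - assert (E2 : Rabs (x - PI * IZR k) = PI / 2)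
      by (pose proof (Rabs_pos_lt _ E); lra).
    unfold Rabs in E2. destruct (Rcase_abs _).
    + exists (2 * k - 1)%Z. rewrite minus_IZR, mult_IZR. simpl (IZR 2). simpl (IZR 1). lra.
    + exists (2 * k + 1)%Z. rewrite plus_IZR, mult_IZR. simpl (IZR 2). simpl (IZR 1). lra.
Qed.

(* Chain rule at a critical point: a 1-Lipschitz outer map needs no derivative. *)
Lemma lipschitz_comp_critical (phi h : R -> R) r : lipschitz1 phi ->
  derivable_pt_lim h r 0 -> derivable_pt_lim (fun t => phi (h t)) r 0.
Proof.
  intros Hphi Hh eps Heps. destruct (Hh eps Heps) as [d Hd]. exists d.
  intros t Ht Hlt. specialize (Hd t Ht Hlt). rewrite Rminus_0_r in *.
  apply Rle_lt_trans with (2 := Hd). unfold Rdiv. rewrite !Rabs_mult.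
  apply Rmult_le_compat_r; [apply Rabs_pos | apply Hphi].
Qed.

Lemma nonzero_deriv_isolated (h : R -> R) x l : derivable_pt_lim h x l -> l <> 0 ->
  exists d, 0 < d /\ forall y, Rabs (y - x) < d -> h y = h x -> y = x.
Proof.
  intros Hh Hl. assert (Hp : 0 < Rabs l) by (apply Rabs_pos_lt; exact Hl).
  destruct (Hh (Rabs l) Hp) as [d Hd]. exists d. split; [apply cond_pos |].
  intros y Hy Hhy. apply NNPP. intro Hne. assert (Hyx : y - x <> 0) by lra.
  specialize (Hd (y - x) Hyx Hy). replace (x + (y - x)) with y in Hd by ring.
  rewrite Hhy in Hd. replace ((h x - h x) / (y - x) - l) with (- l) in Hd
    by (field; exact Hyx).
  rewrite Rabs_Ropp in Hd. lra.
Qed.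

(** * Countable sets *)

Definition enumerable (A : R -> Prop) : Prop :=
  exists e : nat -> R, forall x, A x -> exists n, x = e n.

Lemma enumerable_unique_witnesses (A : R -> Prop) (P : nat -> R -> Prop) :
  (forall n x y, P n x -> P n y -> x = y) ->
  (forall x, A x -> exists n, P n x) -> enumerable A.
Proof.
  intros Huniq Hcov. exists (fun n => epsilon (inhabits 0) (P n)).
  intros x Hx. destruct (Hcov x Hx) as [n Hn]. exists n.
  apply Huniq with n; [exact Hn |]. apply epsilon_spec. exists x; exact Hn.
Qed.

Definition int_of_nat (n : nat) : Z :=
  (Z.of_nat (fst (Cantor.of_nat n)) - Z.of_nat (snd (Cantor.of_nat n)))%Z.
Definition decode3 (n : nat) : Z * Z * nat :=
  let (i, m) := Cantor.of_nat n in
  let (j, k) := Cantor.of_nat m in (int_of_nat i, int_of_nat j, k).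

Lemma int_of_nat_onto z : exists n, int_of_nat n = z.
Proof.
  exists (Cantor.to_nat (Z.to_nat z, Z.to_nat (- z))).
  unfold int_of_nat. rewrite Cantor.cancel_of_to. simpl. lia.
Qed.

Lemma decode3_onto j z N : exists n, decode3 n = (j, z, N).
Proof.
  destruct (int_of_nat_onto j) as [i Hi]. destruct (int_of_nat_onto z) as [m Hm].
  exists (Cantor.to_nat (i, Cantor.to_nat (m, N))).
  unfold decode3. rewrite !Cantor.cancel_of_to. rewrite Hi, Hm. reflexivity.
Qed.

(* Points where h takes a value in c Z and which are isolated in their level
   set form a countable set: each lies alone, among points of its level, in a
   rational interval ((z-2)/N, z/N). *)
Lemma isolated_level_points_enumerable (h : R -> R) (c : R) (A : R -> Prop) :
  (forall x, A x -> (exists j : Z, h x = IZR j * c) /\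
     exists d, 0 < d /\ forall y, Rabs (y - x) < d -> h y = h x -> y = x) ->
  enumerable A.
Proof.
  intro HA.
  set (in_cell z N y := (IZR z - 2) / INR N < y < IZR z / INR N).
  apply enumerable_unique_witnesses with
    (P := fun n x => let '(j, z, N) := decode3 n in
            h x = IZR j * c /\ in_cell z N x /\
            forall y, in_cell z N y -> h y = IZR j * c -> y = x).
  { intros n x y. destruct (decode3 n) as [[j z] N].
    intros (_ & _ & Hx) (Hy1 & Hy2 & _). symmetry. exact (Hx y Hy2 Hy1). }
  intros x Hx. destruct (HA x Hx) as [[j Hj] [d [Hd Hiso]]].
  destruct (archimed_cor1 (d / 2) ltac:(lra)) as [N [HN HN0]].
  assert (HNp : 0 < INR N) by (apply lt_0_INR; exact HN0).
  set (z := up (x * INR N)). destruct (archimed (x * INR N)) as [A1 A2]. fold z in A1, A2.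
  destruct (decode3_onto j z N) as [n Hn]. exists n. rewrite Hn.
  assert (Hxcell : in_cell z N x).
  { unfold in_cell. split; apply (Rmult_lt_reg_r (INR N)); try exact HNp;
      unfold Rdiv; rewrite Rmult_assoc, Rinv_l by lra; lra. }
  assert (Hcell : forall y, in_cell z N y -> Rabs (y - x) < d).
  { intros y Hy. unfold in_cell in *.
    assert (Hw : IZR z / INR N - (IZR z - 2) / INR N = 2 * / INR N) by (field; lra).
    apply Rabs_def1; lra. }
  split; [exact Hj | split; [exact Hxcell |]].
  - intros y Hy Hhy. apply Hiso; [exact (Hcell y Hy) | rewrite Hhy, Hj; reflexivity].
Qed.

(** * Null sets *)

Lemma rsum_le n u v : (forall i, (i < n)%nat -> u i <= v i) -> rsum n u <= rsum n v.
Proof.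
  induction n as [| n IH]; simpl; intros H; [lra |].
  pose proof (H n (Nat.lt_succ_diag_r n)).
  assert (rsum n u <= rsum n v) by (apply IH; intros; apply H; lia). lra.
Qed.

Lemma rsum_mono_length n m u : (forall i, 0 <= u i) -> (n <= m)%nat ->
  rsum n u <= rsum m u.
Proof.
  intros Hu Hnm. induction Hnm; simpl; [lra |]. specialize (Hu m). lra.
Qed.

Lemma null_subset (A B : R -> Prop) : (forall x, A x -> B x) -> null_set B -> null_set A.
Proof.
  intros HAB HB eps He. destruct (HB eps He) as (an & bn & H1 & H2 & H3).
  exists an, bn. split; [| split]; auto.
Qed.

Definition interleave (u v : nat -> R) (n : nat) : R :=
  if Nat.even n then u (Nat.div2 n) else v (Nat.div2 n).

Lemma interleave_even u v n : interleave u v (2 * n) = u n.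
Proof. unfold interleave. rewrite Nat.even_mul, Nat.div2_double. reflexivity. Qed.

Lemma interleave_odd u v n : interleave u v (S (2 * n)) = v n.
Proof.
  unfold interleave. rewrite Nat.even_succ, Nat.odd_mul, Nat.div2_succ_double.
  reflexivity.
Qed.

Lemma rsum_interleave M u v :
  rsum (2 * M) (interleave u v) = rsum M u + rsum M v.
Proof.
  induction M as [| M IH]; simpl; [lra |].
  replace (M + S (M + 0))%nat with (S (2 * M)) by lia. simpl.
  replace (M + (M + 0))%nat with (2 * M)%nat by lia.
  rewrite IH, interleave_even, interleave_odd. lra.
Qed.

(* Covering A and B with eps/2 each and interleaving the covers. *)
Lemma null_union (A B : R -> Prop) : null_set A -> null_set B ->
  null_set (fun x => A x \/ B x).
Proof.
  intros HA HB eps He.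
  destruct (HA (eps / 2) ltac:(lra)) as (a1 & b1 & H1 & H2 & H3).
  destruct (HB (eps / 2) ltac:(lra)) as (a2 & b2 & K1 & K2 & K3).
  exists (interleave a1 a2), (interleave b1 b2).
  assert (Hlen : forall n, interleave b1 b2 n - interleave a1 a2 n
                           = interleave (fun i => b1 i - a1 i) (fun i => b2 i - a2 i) n).
  { intro n. unfold interleave. destruct (Nat.even n); reflexivity. }
  split; [| split].
  - intros x [Hx | Hx].
    + destruct (H1 x Hx) as [n Hn]. exists (2 * n)%nat.
      rewrite !interleave_even. exact Hn.
    + destruct (K1 x Hx) as [n Hn]. exists (S (2 * n)).
      rewrite !interleave_odd. exact Hn.
  - intro n. unfold interleave. destruct (Nat.even n); auto.
  - intro N. apply Rle_trans with (rsum (2 * N) (fun n => interleave b1 b2 n - interleave a1 a2 n)).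
    + apply rsum_mono_length; [| lia]. intro i. rewrite Hlen. unfold interleave.
      destruct (Nat.even i); [pose proof (H2 (Nat.div2 i)) | pose proof (K2 (Nat.div2 i))]; lra.
    + rewrite (functional_extensionality _ _ Hlen), rsum_interleave.
      specialize (H3 N). specialize (K3 N). lra.
Qed.

Lemma rsum_geometric eps N : rsum N (fun n => eps / 2 ^ (S n)) = eps - eps / 2 ^ N.
Proof.
  induction N as [| N IH]; [simpl; field |].
  change (rsum (S N) (fun n => eps / 2 ^ S n))
    with (rsum N (fun n => eps / 2 ^ S n) + eps / 2 ^ S N).
  rewrite IH. simpl. field. apply pow_nonzero. lra.
Qed.

(* The n-th point of an enumeration is covered by an interval of length eps/2^(n+1). *)
Lemma null_enumerable (A : R -> Prop) : enumerable A -> null_set A.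
Proof.
  intros [e H] eps He.
  assert (Hp : forall n, 0 < eps / 2 ^ (S (S n))).
  { intro n. apply Rdiv_lt_0_compat; [lra | apply pow_lt; lra]. }
  exists (fun n => e n - eps / 2 ^ (S (S n))), (fun n => e n + eps / 2 ^ (S (S n))).
  split; [| split].
  - intros x Hx. destruct (H x Hx) as [n ->]. exists n. pose proof (Hp n). lra.
  - intro n. pose proof (Hp n). lra.
  - intro N.
    replace (fun n => e n + eps / 2 ^ S (S n) - (e n - eps / 2 ^ S (S n)))
      with (fun n => eps / 2 ^ (S n)).
    2: { apply functional_extensionality. intro n. simpl. field. apply pow_nonzero. lra. }
    rewrite rsum_geometric.
    assert (0 < eps / 2 ^ N) by (apply Rdiv_lt_0_compat; [lra | apply pow_lt; lra]).
    lra.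
Qed.

Lemma cont_on_nonneg_lipschitz phi h : lipschitz1 phi ->
  cont_on_nonneg h -> cont_on_nonneg (fun r => phi (h r)).
Proof.
  intros Hphi Hh x Hx eps He. destruct (Hh x Hx eps He) as [d [Hd Hy]].
  exists d. split; [exact Hd |]. intros y Hy0 Hyx.
  eapply Rle_lt_trans; [apply Hphi | exact (Hy y Hy0 Hyx)].
Qed.

Lemma loc_abs_cont_lipschitz phi h : lipschitz1 phi ->
  loc_abs_cont h -> loc_abs_cont (fun r => phi (h r)).
Proof.
  intros Hphi Hh c d Hc Hcd eps He. destruct (Hh c d Hc Hcd eps He) as [del [Hdel Hs]].
  exists del. split; [exact Hdel |]. intros n x y Hxy Hsum.
  eapply Rle_lt_trans; [| exact (Hs n x y Hxy Hsum)].
  apply rsum_le. intros i _. apply Hphi.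
Qed.

Lemma lim_infty_lipschitz phi h l : lipschitz1 phi ->
  lim_infty h l -> lim_infty (fun r => phi (h r)) (phi l).
Proof.
  intros Hphi Hh eps He. destruct (Hh eps He) as [M HM]. exists M. intros r Hr.
  eapply Rle_lt_trans; [apply Hphi | exact (HM r Hr)].
Qed.

Lemma fold_comp_deriv (h : R -> R) r l : derivable_pt_lim h r l ->
  l = 0 \/ 0 < Rabs (pi_offset (h r)) < PI / 2 ->
  derivable_pt_lim (fun t => pi_fold (h t)) r (fold_sign (h r) * l).
Proof.
  intros Hh [-> | Hoff].
  - rewrite Rmult_0_r. exact (lipschitz_comp_critical pi_fold h r pi_fold_lipschitz Hh).
  - exact (derivable_pt_lim_comp h pi_fold r l _ Hh (pi_fold_deriv _ Hoff)).
Qed.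

(* The chain rule can only fail where f crosses a kink with nonzero slope;
   those points are isolated in level sets of f, hence form a null set. *)
Lemma ae_deriv_fold (f df : R -> R) : ae_deriv f df ->
  ae_deriv (fun r => pi_fold (f r)) (fun r => fold_sign (f r) * df r).
Proof.
  intro Hf.
  set (crossings := fun r => derivable_pt_lim f r (df r) /\ df r <> 0 /\
                             exists j : Z, f r = IZR j * (PI / 2)).
  assert (Hcross : null_set crossings).
  { apply null_enumerable, (isolated_level_points_enumerable f (PI / 2)).
    intros x (Hd & Hn & Hj). split; [exact Hj |].
    exact (nonzero_deriv_isolated f x (df x) Hd Hn). }
  apply null_subset with (B := fun r => (0 < r /\ ~ derivable_pt_lim f r (df r))
                                         \/ crossings r).
  2: { apply null_union; assumption. }
  intros r [Hr Hbad].
  destruct (classic (derivable_pt_lim f r (df r))) as [Hd | Hd]; [right | left; auto].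
  destruct (classic (df r = 0 \/ 0 < Rabs (pi_offset (f r)) < PI / 2)) as [Hok | Hkink].
  - exfalso. exact (Hbad (fold_comp_deriv f r (df r) Hd Hok)).
  - apply not_or_and in Hkink as [Hn Hoff].
    split; [exact Hd | split; [exact Hn | exact (pi_fold_kink _ Hoff)]].
Qed.

(** * The energy densities *)

Lemma E1_ext kappa a f ft da df dft :
  (forall r, sin (ft r) ^ 2 = sin (f r) ^ 2) -> (forall r, dft r ^ 2 = df r ^ 2) ->
  Defs.E1 kappa a ft da dft = Defs.E1 kappa a f da df.
Proof.
  intros Hs Hd. apply functional_extensionality. intro r. unfold Defs.E1.
  rewrite Hs, Hd. reflexivity.
Qed.

Lemma E1_fold kappa a f da df :
  Defs.E1 kappa a (fun r => pi_fold (f r)) da (fun r => fold_sign (f r) * df r)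
  = Defs.E1 kappa a f da df.
Proof.
  apply E1_ext; intro r; [apply pi_fold_sin2 |].
  unfold fold_sign. destruct (Rle_dec _ _); ring.
Qed.

Lemma E1_nonneg kappa a f da df r : 0 <= kappa -> 0 < r -> 0 <= Defs.E1 kappa a f da df r.
Proof.
  intros Hk Hr. unfold Defs.E1.
  assert (Hsq : forall x, 0 <= x ^ 2) by (intro x; apply pow2_ge_0).
  assert (Hdiv : forall x, 0 <= x -> 0 <= x / r ^ 2).
  { intros x Hx. unfold Rdiv. apply Rmult_le_pos; [exact Hx |].
    left. apply Rinv_0_lt_compat, pow_lt. exact Hr. }
  assert (Has : 0 <= a r ^ 2 * sin (f r) ^ 2) by (apply Rmult_le_pos; apply Hsq).
  pose proof (Hdiv _ Has). pose proof (Hdiv _ (Hsq (a r ^ 2 - 1))).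
  pose proof (Hsq (da r)). pose proof (Hsq (df r)).
  assert (0 <= r ^ 2 * df r ^ 2) by (apply Rmult_le_pos; apply Hsq).
  assert (0 <= 2 * kappa * a r ^ 2 * sin (f r) ^ 2
               * (2 * df r ^ 2 + a r ^ 2 * sin (f r) ^ 2 / r ^ 2)).
  { apply Rmult_le_pos; [| lra]. rewrite Rmult_assoc. apply Rmult_le_pos; [| exact Has].
    lra. }
  lra.
Qed.

Lemma E2_nonneg a g dg r : 0 <= Defs.E2 a g dg r.
Proof.
  unfold Defs.E2. pose proof (pow2_ge_0 (dg r)). pose proof (pow2_ge_0 (a r)).
  pose proof (pow2_ge_0 (g r)). pose proof (pow2_ge_0 r).
  assert (0 <= r ^ 2 * dg r ^ 2) by (apply Rmult_le_pos; lra).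
  assert (0 <= 2 * a r ^ 2 * g r ^ 2) by (apply Rmult_le_pos; [apply Rmult_le_pos |]; lra).
  lra.
Qed.

Lemma lower_sums_mono h1 h2 v : (forall x, 0 < x -> h1 x <= h2 x) ->
  lower_sums h1 v -> lower_sums h2 v.
Proof.
  intros H (n & c & K & m & H1 & H2 & H3). exists n, c, K, m.
  split; [| split; assumption]. intros i Hi.
  destruct (H1 i Hi) as (B1 & B2 & B3 & B4 & B5).
  split; [exact B1 | split; [exact B2 | split; [exact B3 | split; [exact B4 |]]]].
  intros x Kx.
  specialize (B5 x Kx). specialize (H x (B3 x Kx)). lra.
Qed.

Lemma nonneg_integral_dominated h H I : (forall x, 0 < x -> h x <= H x) ->
  nonneg_integral H I -> exists I', nonneg_integral h I'.
Proof.
  intros Hle HI.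
  assert (Hb : bound (lower_sums h)).
  { exists I. intros v Hv. apply HI. exact (lower_sums_mono h H v Hle Hv). }
  assert (Hne : exists v, lower_sums h v).
  { exists 0, O, (fun _ => 0), (fun _ _ => False), (fun _ => 0).
    split; [intros i Hi; lia |]. split; [intros; lia | reflexivity]. }
  destruct (completeness _ Hb Hne) as [m Hm]. exists m. exact Hm.
Qed.

(* Finite energy E makes L well defined: both parts of E1 - E2 are below E1 + E2. *)
Lemma L_exists kappa a f g da df dg I : 0 < kappa ->
  nonneg_integral (fun r => Defs.E1 kappa a f da df r + Defs.E2 a g dg r) I ->
  exists l, L_is kappa a f g da df dg l.
Proof.
  intros Hk HI.
  assert (Hdom : forall x, 0 < x ->
            Rmax 0 (Defs.E1 kappa a f da df x - Defs.E2 a g dg x)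
              <= Defs.E1 kappa a f da df x + Defs.E2 a g dg x /\
            Rmax 0 (- (Defs.E1 kappa a f da df x - Defs.E2 a g dg x))
              <= Defs.E1 kappa a f da df x + Defs.E2 a g dg x).
  { intros x Hx. pose proof (E1_nonneg kappa a f da df x ltac:(lra) Hx).
    pose proof (E2_nonneg a g dg x).
    split; unfold Rmax; destruct (Rle_dec _ _); lra. }
  destruct (nonneg_integral_dominated _ _ I (fun x Hx => proj1 (Hdom x Hx)) HI)
    as [Ip HIp].
  destruct (nonneg_integral_dominated _ _ I (fun x Hx => proj2 (Hdom x Hx)) HI)
    as [In HIn].
  exists (Ip - In), Ip, In. split; [exact HIp | split; [exact HIn | reflexivity]].
Qed.

(* Folding f keeps (a, f, g) admissible: the boundary values survive because
   the fold fixes 0 and PI - omega, and the energy density is unchanged. *)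
Lemma admissible_fold kappa omega q a f g da df dg :
  PI / 2 < omega < PI ->
  admissible kappa omega q a f g da df dg ->
  admissible kappa omega q a (fun r => pi_fold (f r)) g da
    (fun r => fold_sign (f r) * df r) dg.
Proof.
  intros Hw (ca & cf & cg & aca & acf & acg & dA & dF & dG & a0 & la & f0 & lf & lg & HI).
  assert (Hlim : pi_fold (PI - omega) = PI - omega) by (apply pi_fold_fixed; lra).
  assert (H0 : pi_fold 0 = 0) by (apply pi_fold_fixed; pose proof PI_RGT_0; lra).
  repeat split; try assumption.
  - exact (cont_on_nonneg_lipschitz _ _ pi_fold_lipschitz cf).
  - exact (loc_abs_cont_lipschitz _ _ pi_fold_lipschitz acf).
  - exact (ae_deriv_fold f df dF).
  - cbv beta. rewrite f0. exact H0.
  - rewrite <- Hlim. exact (lim_infty_lipschitz _ _ _ pi_fold_lipschitz lf).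
  - rewrite E1_fold. exact HI.
Qed.

Theorem lemma3p1 (kappa omega q : R) (a f g da df dg : R -> R) :
  0 < kappa -> PI / 2 < omega < PI -> 0 < q ->
  in_C kappa omega q a f g da df dg ->
  exists ft dft : R -> R,
    (forall r, 0 <= r -> 0 <= ft r <= PI / 2) /\
    in_C kappa omega q a ft g da dft dg /\
    exists l_t l, L_is kappa a ft g da dft dg l_t /\
                  L_is kappa a f g da df dg l /\ l_t <= l.
Proof.
  intros Hk Hw _ [Hadm Hconstr].
  exists (fun r => pi_fold (f r)), (fun r => fold_sign (f r) * df r).
  split; [intros r _; apply pi_fold_range |].
  (* The constraint only involves a and g, which are untouched. *)
  split; [exact (conj (admissible_fold _ _ _ _ _ _ _ _ _ Hw Hadm) Hconstr) |].
  destruct Hadm as (_ & _ & _ & _ & _ & _ & _ & _ & _ & _ & _ & _ & _ & _ & [I HI]).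
  destruct (L_exists kappa a f g da df dg I Hk HI) as [l Hl].
  (* L is the integral of E1 - E2, and E1 does not see the fold: equal values. *)
  exists l, l. unfold L_is in *. rewrite E1_fold. split; [exact Hl | split; [exact Hl | lra]].
Qed.
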